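(* Let $\mathbb H(t)=4\arctan(e^t)$ and let $\lambda=q+ip$ with $q,p\in\mathbb{R}$, $q^2+p^2=1$, $p>0$, $\lambda\ne i$. Suppose $\Phi\in C^\infty(\mathbb{R}^2;\mathbb{C}^2)$ is parallel with respect to $(\mathbb H(x),\lambda)$ and $\sup_{(x,y)\in\ell}|\Phi(x,y)|<\infty$, where $\ell=\{(x,y)\in\mathbb{R}^2:-qx+py=0\}$. Then $\Phi\equiv0$.
   Context: Pauli matrices $\sigma_1=\begin{pmatrix}0&1\\1&0\end{pmatrix}$, $\sigma_2=\begin{pmatrix}0&-i\\ i&0\end{pmatrix}$, $\sigma_3=\begin{pmatrix}1&0\\0&-1\end{pmatrix}$. For $u\in C^\infty(\mathbb{R}^2)$, $\lambda\ne0$: $A=\frac i4\big((\lambda-\lambda^{-1}\cos u)\sigma_3-(\partial_xu-i\partial_yu)\sigma_2-\lambda^{-1}(\sin u)\sigma_1\big)$, $B=\frac14\big(-(\lambda+\lambda^{-1}\cos u)\sigma_3+(\partial_xu-i\partial_yu)\sigma_2-\lambda^{-1}(\sin u)\sigma_1\big)$; $\Phi$ is parallel with respect to $(u,\lambda)$ if $\partial_x\Phi=A\Phi$ and $\partial_y\Phi=B\Phi$ on $\mathbb{R}^2$. *)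

From Stdlib Require Import Reals.
From Coquelicot Require Import Coquelicot.
Open Scope R_scope.

Definition C2 : Type := (C * C)%type.
Record Mat2 := mk2 { m11 : C; m12 : C; m21 : C; m22 : C }.

Definition mat_add (M N : Mat2) : Mat2 :=
  mk2 (m11 M + m11 N)%C (m12 M + m12 N)%C (m21 M + m21 N)%C (m22 M + m22 N)%C.
Definition mat_scal (c : C) (M : Mat2) : Mat2 :=
  mk2 (c * m11 M)%C (c * m12 M)%C (c * m21 M)%C (c * m22 M)%C.
Definition mat_vec (M : Mat2) (v : C2) : C2 :=
  ((m11 M * fst v + m12 M * snd v)%C, (m21 M * fst v + m22 M * snd v)%C).

Definition sigma1 : Mat2 := mk2 0%C 1%C 1%C 0%C.
Definition sigma2 : Mat2 := mk2 0%C (- Ci)%C Ci 0%C.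
Definition sigma3 : Mat2 := mk2 1%C 0%C 0%C (-1)%C.

Definition dxu (u : R -> R -> R) (x y : R) : R := Derive (fun t => u t y) x.
Definition dyu (u : R -> R -> R) (x y : R) : R := Derive (fun t => u x t) y.

Definition Amat (u : R -> R -> R) (lam : C) (x y : R) : Mat2 :=
  let w := (RtoC (dxu u x y) - Ci * RtoC (dyu u x y))%C in
  mat_scal (Ci / RtoC 4)%C
    (mat_add (mat_add
       (mat_scal (lam - / lam * RtoC (cos (u x y)))%C sigma3)
       (mat_scal (- w)%C sigma2))
       (mat_scal (- (/ lam * RtoC (sin (u x y))))%C sigma1)).

Definition Bmat (u : R -> R -> R) (lam : C) (x y : R) : Mat2 :=
  let w := (RtoC (dxu u x y) - Ci * RtoC (dyu u x y))%C in
  mat_scal (/ RtoC 4)%C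
    (mat_add (mat_add
       (mat_scal (- (lam + / lam * RtoC (cos (u x y))))%C sigma3)
       (mat_scal w sigma2))
       (mat_scal (- (/ lam * RtoC (sin (u x y))))%C sigma1)).

Definition parallel (u : R -> R -> R) (lam : C) (Phi : R -> R -> C2) : Prop :=
  forall x y : R,
    is_derive (fun t => fst (Phi t y)) x (fst (mat_vec (Amat u lam x y) (Phi x y))) /\
    is_derive (fun t => snd (Phi t y)) x (snd (mat_vec (Amat u lam x y) (Phi x y))) /\
    is_derive (fun t => fst (Phi x t)) y (fst (mat_vec (Bmat u lam x y) (Phi x y))) /\
    is_derive (fun t => snd (Phi x t)) y (snd (mat_vec (Bmat u lam x y) (Phi x y))).

Fixpoint Ck2 (k : nat) (f : R -> R -> R) : Prop :=
  (forall p : R * R, continuous (fun q : R * R => f (fst q) (snd q)) p) /\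
  match k with
  | O => True
  | S k' => exists fx fy : R -> R -> R,
      (forall x y, is_derive (fun t => f t y) x (fx x y)) /\
      (forall x y, is_derive (fun t => f x t) y (fy x y)) /\
      Ck2 k' fx /\ Ck2 k' fy
  end.

Definition smooth2 (f : R -> R -> R) : Prop := forall k, Ck2 k f.

Definition smoothC2 (Phi : R -> R -> C2) : Prop :=
  smooth2 (fun x y => Re (fst (Phi x y))) /\ smooth2 (fun x y => Im (fst (Phi x y))) /\
  smooth2 (fun x y => Re (snd (Phi x y))) /\ smooth2 (fun x y => Im (snd (Phi x y))).

Definition normC2 (v : C2) : R := sqrt (Cmod (fst v) ^ 2 + Cmod (snd v) ^ 2).

Definition Hkink (t : R) : R := 4 * atan (exp t).

From Stdlib Require Import Reals Lra Psatz.
From Coquelicot Require Import Coquelicot.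
Open Scope R_scope.

(* Write S = sech x and T = tanh x.  Along the kink u = H(x) one has
   u_x = 2S, cos u = T^2 - S^2 and sin u = -2ST.  For lambda = q + ip on the
   unit circle (so 1/lambda is its conjugate) the system
   Phi_x = A Phi, Phi_y = B Phi has two explicit first integrals
     W- = e^{-(px+qy)/2} (-S phi1 + (i lambda - T) phi2),
     W+ = e^{ (px+qy)/2} ((-i lambda - T) phi1 + S phi2),
   i.e. both are constant on R^2.  The line l is {s (p, q)}, on which
   px + qy = s; since Phi is bounded there, |W-| <= C e^{-s/2} (s -> +oo) and
   |W+| <= C e^{s/2} (s -> -oo) force both constants to vanish.  Finally the
   linear system W- = W+ = 0 in (phi1, phi2) has determinant -2 q lambda,
   which is nonzero because p > 0 and lambda <> i give q <> 0.

   The system is complex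
   linear, so i Phi is parallel as well; the real parts of W-(Phi),
   W-(i Phi), W+(Phi), W+(i Phi) then give all four real equations. *)

(* sech and tanh as rational functions of e^x, so that `field` can use them. *)
Definition sech (x : R) : R := 2 * exp x / (1 + exp x ^ 2).
Definition tnh (x : R) : R := (exp x ^ 2 - 1) / (1 + exp x ^ 2).

Lemma exp_den_pos (x : R) : 0 < 1 + exp x ^ 2.
Proof. pose proof (exp_pos x). nra. Qed.

Lemma sech_tnh_sq (x : R) : sech x ^ 2 + tnh x ^ 2 = 1.
Proof. pose proof (exp_den_pos x). unfold sech, tnh. field. lra. Qed.

Lemma Hkink_derive (x : R) : is_derive Hkink x (2 * sech x).
Proof. pose proof (exp_den_pos x). unfold Hkink, sech. auto_derive; [easy | field; lra]. Qed.

Lemma half_kink_cos_sin (x : R) :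
  cos (2 * atan (exp x)) = - tnh x /\ sin (2 * atan (exp x)) = sech x.
Proof.
  pose proof (exp_den_pos x).
  assert (Hs : 0 < sqrt (1 + exp x * exp x)) by (apply sqrt_lt_R0; nra).
  assert (Hs2 : sqrt (1 + exp x * exp x) ^ 2 = 1 + exp x ^ 2)
    by (rewrite pow2_sqrt; [ring | nra]).
  rewrite cos_2a, sin_2a, cos_atan, sin_atan. unfold Rsqr, sech, tnh.
  split; field_simplify; try lra; rewrite Hs2; field; lra.
Qed.

Lemma cos_Hkink (x : R) : cos (Hkink x) = tnh x ^ 2 - sech x ^ 2.
Proof.
  destruct (half_kink_cos_sin x) as [Hc Hs]. unfold Hkink.
  replace (4 * atan (exp x)) with (2 * (2 * atan (exp x))) by ring.
  rewrite cos_2a, Hc, Hs. ring.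
Qed.

Lemma sin_Hkink (x : R) : sin (Hkink x) = -2 * sech x * tnh x.
Proof.
  destruct (half_kink_cos_sin x) as [Hc Hs]. unfold Hkink.
  replace (4 * atan (exp x)) with (2 * (2 * atan (exp x))) by ring.
  rewrite sin_2a, Hc, Hs. ring.
Qed.

Lemma dxu_kink (x y : R) : dxu (fun x _ => Hkink x) x y = 2 * sech x.
Proof. apply is_derive_unique, Hkink_derive. Qed.

Lemma dyu_kink (x y : R) : dyu (fun x _ => Hkink x) x y = 0.
Proof. unfold dyu. apply Derive_const. Qed.

Definition is_derive_C2 (f : R -> C2) (t : R) (v : C2) : Prop :=
  is_derive (fun s => Re (fst (f s))) t (Re (fst v)) /\
  is_derive (fun s => Im (fst (f s))) t (Im (fst v)) /\
  is_derive (fun s => Re (snd (f s))) t (Re (snd v)) /\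
  is_derive (fun s => Im (snd (f s))) t (Im (snd v)).

Definition solves (M N : R -> R -> Mat2) (Phi : R -> R -> C2) : Prop :=
  forall x y : R,
    is_derive_C2 (fun t => Phi t y) x (mat_vec (M x y) (Phi x y)) /\
    is_derive_C2 (fun t => Phi x t) y (mat_vec (N x y) (Phi x y)).

Lemma is_derive_Re (f : R -> C) (x : R) (l : C) :
  is_derive f x l -> is_derive (fun t => Re (f t)) x (Re l).
Proof.
  intros Hf. apply (filterdiff_comp' f Re x _ Re Hf).
  apply filterdiff_linear, (is_linear_fst (K := R_AbsRing)).
Qed.

Lemma is_derive_Im (f : R -> C) (x : R) (l : C) :
  is_derive f x l -> is_derive (fun t => Im (f t)) x (Im l).
Proof.
  intros Hf. apply (filterdiff_comp' f Im x _ Im Hf).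
  apply filterdiff_linear, (is_linear_snd (K := R_AbsRing)).
Qed.

Lemma parallel_solves (u : R -> R -> R) (lam : C) (Phi : R -> R -> C2) :
  parallel u lam Phi -> solves (Amat u lam) (Bmat u lam) Phi.
Proof.
  intros Hpar x y. destruct (Hpar x y) as (Hx1 & Hx2 & Hy1 & Hy2).
  split; (split; [|split; [|split]]); auto using is_derive_Re, is_derive_Im.
Qed.

Definition scal2 (z : C) (v : C2) : C2 := (z * fst v, z * snd v)%C.

Lemma mat_vec_scal2 (M : Mat2) (z : C) (v : C2) :
  mat_vec M (scal2 z v) = scal2 z (mat_vec M v).
Proof. unfold mat_vec, scal2; simpl; f_equal; field. Qed.

Lemma normC2_scal2_Ci (v : C2) : normC2 (scal2 Ci v) = normC2 v.
Proof.
  assert (HCi : forall z, Cmod (Ci * z) = Cmod z)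
    by (intros z; rewrite Cmod_mult; replace (Cmod Ci) with 1; [ring |];
        unfold Cmod, Ci; simpl fst; simpl snd;
        replace (0 ^ 2 + 1 ^ 2) with 1 by ring; now rewrite sqrt_1).
  unfold normC2, scal2; simpl fst; simpl snd. now rewrite !HCi.
Qed.

Lemma is_derive_C2_rot (f : R -> C2) (t : R) (v : C2) :
  is_derive_C2 f t v -> is_derive_C2 (fun s => scal2 Ci (f s)) t (scal2 Ci v).
Proof.
  assert (ReCi : forall z, Re (Ci * z) = - Im z) by (intros [a b]; simpl; ring).
  assert (ImCi : forall z, Im (Ci * z) = Re z) by (intros [a b]; simpl; ring).
  intros (H1 & H2 & H3 & H4). unfold is_derive_C2, scal2; cbn [fst snd].
  rewrite !ReCi, !ImCi.
  split; [|split; [|split]].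
  - apply (is_derive_ext (fun s => - Im (fst (f s)))); [intros; now rewrite ReCi|].
    now apply @is_derive_opp.
  - apply (is_derive_ext (fun s => Re (fst (f s)))); [intros; now rewrite ImCi|].
    exact H1.
  - apply (is_derive_ext (fun s => - Im (snd (f s)))); [intros; now rewrite ReCi|].
    now apply @is_derive_opp.
  - apply (is_derive_ext (fun s => Re (snd (f s)))); [intros; now rewrite ImCi|].
    exact H3.
Qed.

Lemma solves_rot (M N : R -> R -> Mat2) (Phi : R -> R -> C2) :
  solves M N Phi -> solves M N (fun x y => scal2 Ci (Phi x y)).
Proof.
  intros Hsol x y. destruct (Hsol x y) as [Hx Hy].
  rewrite !mat_vec_scal2. split; now apply is_derive_C2_rot.
Qed.

Lemma constant_of_zero_derive (f : R -> R) :
  (forall t, is_derive f t 0) -> forall a b, f a = f b.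
Proof.
  intros Hf a b. destruct (Rtotal_order a b) as [Hab | [-> | Hba]].
  - apply (eq_is_derive f a b); auto.
  - reflexivity.
  - symmetry. apply (eq_is_derive f b a); auto.
Qed.

Lemma constant_of_zero_partials (F : R -> R -> R) :
  (forall x y, is_derive (fun t => F t y) x 0) ->
  (forall x y, is_derive (fun t => F x t) y 0) ->
  forall x y, F x y = F 0 0.
Proof.
  intros Hx Hy x y.
  rewrite (constant_of_zero_derive (fun t => F t y) (fun t => Hx t y) x 0).
  exact (constant_of_zero_derive (fun t => F 0 t) (fun t => Hy 0 t) y 0).
Qed.

Lemma zero_of_decay (K B : R) :
  (forall t, 0 <= t -> Rabs K <= B * exp (- t / 2)) -> K = 0.
Proof.
  intros Hdecay. destruct (Req_dec K 0) as [| HK]; [assumption | exfalso].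
  assert (HKpos : 0 < Rabs K) by now apply Rabs_pos_lt.
  assert (HB : Rabs K <= B) by (specialize (Hdecay 0 (Rle_refl 0));
    replace (- 0 / 2) with 0 in Hdecay by field; rewrite exp_0 in Hdecay; lra).
  set (u := B / Rabs K).
  assert (Hu : 1 <= u) by (unfold u; apply (Rmult_le_reg_r (Rabs K)); [lra | field_simplify; lra]).
  specialize (Hdecay (2 * u) ltac:(lra)).
  replace (- (2 * u) / 2) with (- u) in Hdecay by field.
  assert (Hexp : exp u * exp (- u) = 1) by (rewrite <- exp_plus, Rplus_opp_r; apply exp_0).
  pose proof (exp_ineq1 u ltac:(lra)). pose proof (exp_pos (- u)).
  assert (Hbig : B < Rabs K * exp u) by (unfold u in *;
    apply (Rlt_le_trans _ (Rabs K * (1 + B / Rabs K))); [field_simplify; lra | nra]).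
  nra.
Qed.

Lemma linear_form_bound (g1 g2 g3 g4 : R) (v : C2) :
  g1 ^ 2 + g2 ^ 2 + g3 ^ 2 + g4 ^ 2 <= 4 ->
  Rabs (g1 * Re (fst v) + g2 * Im (fst v) + g3 * Re (snd v) + g4 * Im (snd v))
    <= 2 * normC2 v.
Proof.
  intros Hg. unfold normC2. rewrite !Cmod2_alt.
  set (a := Re (fst v)); set (b := Im (fst v)); set (c := Re (snd v)); set (d := Im (snd v)).
  set (N := a ^ 2 + b ^ 2 + (c ^ 2 + d ^ 2)).
  (* Lagrange's identity: (sum g^2)(sum f^2) - (sum g f)^2 is a sum of squares *)
  assert (Hcs : (g1 * a + g2 * b + g3 * c + g4 * d) ^ 2 <= 4 * N).
  { pose proof (pow2_ge_0 (g1 * b - g2 * a)). pose proof (pow2_ge_0 (g1 * c - g3 * a)).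
    pose proof (pow2_ge_0 (g1 * d - g4 * a)). pose proof (pow2_ge_0 (g2 * c - g3 * b)).
    pose proof (pow2_ge_0 (g2 * d - g4 * b)). pose proof (pow2_ge_0 (g3 * d - g4 * c)).
    unfold N; nra. }
  rewrite <- sqrt_Rsqr_abs, <- (sqrt_pow2 2) by lra.
  rewrite <- sqrt_mult by (unfold N; nra || lra). apply sqrt_le_1_alt. unfold Rsqr. lra.
Qed.

(* Real parts of the linear forms inside W- and W+ (without exponential weights). *)
Definition Lminus (q p x : R) (v : C2) : R :=
  - sech x * Re (fst v) - (p + tnh x) * Re (snd v) - q * Im (snd v).
Definition Lplus (q p x : R) (v : C2) : R :=
  (p - tnh x) * Re (fst v) + q * Im (fst v) + sech x * Re (snd v).

Lemma Lminus_bound (q p x : R) (v : C2) :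
  q ^ 2 + p ^ 2 = 1 -> Rabs (Lminus q p x v) <= 2 * normC2 v.
Proof.
  intros Hqp. pose proof (sech_tnh_sq x).
  replace (Lminus q p x v) with ((- sech x) * Re (fst v) + 0 * Im (fst v)
    + (- (p + tnh x)) * Re (snd v) + (- q) * Im (snd v)) by (unfold Lminus; ring).
  apply linear_form_bound. nra.
Qed.

Lemma Lplus_bound (q p x : R) (v : C2) :
  q ^ 2 + p ^ 2 = 1 -> Rabs (Lplus q p x v) <= 2 * normC2 v.
Proof.
  intros Hqp. pose proof (sech_tnh_sq x).
  replace (Lplus q p x v) with ((p - tnh x) * Re (fst v) + q * Im (fst v)
    + sech x * Re (snd v) + 0 * Im (snd v)) by (unfold Lplus; ring).
  apply linear_form_bound. nra.
Qed.

Definition Wminus (q p : R) (Phi : R -> R -> C2) (x y : R) : R :=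
  exp (- (p * x + q * y) / 2) * Lminus q p x (Phi x y).
Definition Wplus (q p : R) (Phi : R -> R -> C2) (x y : R) : R :=
  exp ((p * x + q * y) / 2) * Lplus q p x (Phi x y).

(* is_derive_unique with binders typed in R, so that it rewrites the Derive
   terms produced by auto_derive. *)
Lemma Derive_of_is_derive (f : R -> R) (x l : R) : is_derive f x l -> Derive f x = l.
Proof. apply is_derive_unique. Qed.

Section FirstIntegrals.
Variables (q p r : R) (Phi : R -> R -> C2).
Hypothesis Hq : q = (1 - r ^ 2) / (1 + r ^ 2).
Hypothesis Hp : p = 2 * r / (1 + r ^ 2).
Hypothesis Hsol :
  solves (Amat (fun x _ => Hkink x) (q, p)) (Bmat (fun x _ => Hkink x) (q, p)) Phi.

Lemma unit_circle : q ^ 2 + p ^ 2 = 1.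
Proof. rewrite Hq, Hp. field. nra. Qed.

Ltac kink_identity x y :=
  unfold Amat, Bmat, mat_vec, mat_scal, mat_add, sigma1, sigma2, sigma3;
  rewrite dxu_kink, dyu_kink, cos_Hkink, sin_Hkink;
  destruct (Phi x y) as [[a b] [c d]];
  rewrite Hq, Hp; unfold sech, tnh; simpl; pose proof (exp_pos x);
  field; repeat split; nra.

(* In each of the four derivative computations below the components of Phi
   are named, so that auto_derive treats them as opaque derivable functions;
   their derivatives are then read off from the system. *)
Lemma Wminus_dx (x y : R) : is_derive (fun t => Wminus q p Phi t y) x 0.
Proof.
  destruct (Hsol x y) as [(Ha & _ & Hc & Hd) _].
  set (fa := fun t => Re (fst (Phi t y))) in *.
  set (fc := fun t => Re (snd (Phi t y))) in *.
  set (fd := fun t => Im (snd (Phi t y))) in *.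
  apply (is_derive_ext (fun t => exp (- (p * t + q * y) / 2) *
    (- sech t * fa t - (p + tnh t) * fc t - q * fd t))); [reflexivity|].
  unfold sech, tnh. auto_derive.
  - pose proof (exp_den_pos x). repeat split; try lra; eexists; eassumption.
  - rewrite (Derive_of_is_derive (fun t => fa t) x _ Ha),
      (Derive_of_is_derive (fun t => fc t) x _ Hc), (Derive_of_is_derive (fun t => fd t) x _ Hd).
    unfold fa, fc, fd. kink_identity x y.
Qed.

Lemma Wminus_dy (x y : R) : is_derive (fun t => Wminus q p Phi x t) y 0.
Proof.
  destruct (Hsol x y) as [_ (Ha & _ & Hc & Hd)].
  set (fa := fun t => Re (fst (Phi x t))) in *.
  set (fc := fun t => Re (snd (Phi x t))) in *.
  set (fd := fun t => Im (snd (Phi x t))) in *.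
  apply (is_derive_ext (fun t => exp (- (p * x + q * t) / 2) *
    (- sech x * fa t - (p + tnh x) * fc t - q * fd t))); [reflexivity|].
  auto_derive.
  - repeat split; eexists; eassumption.
  - rewrite (Derive_of_is_derive (fun t => fa t) y _ Ha),
      (Derive_of_is_derive (fun t => fc t) y _ Hc), (Derive_of_is_derive (fun t => fd t) y _ Hd).
    unfold fa, fc, fd. kink_identity x y.
Qed.

Lemma Wplus_dx (x y : R) : is_derive (fun t => Wplus q p Phi t y) x 0.
Proof.
  destruct (Hsol x y) as [(Ha & Hb & Hc & _) _].
  set (fa := fun t => Re (fst (Phi t y))) in *.
  set (fb := fun t => Im (fst (Phi t y))) in *.
  set (fc := fun t => Re (snd (Phi t y))) in *.
  apply (is_derive_ext (fun t => exp ((p * t + q * y) / 2) *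
    ((p - tnh t) * fa t + q * fb t + sech t * fc t))); [reflexivity|].
  unfold sech, tnh. auto_derive.
  - pose proof (exp_den_pos x). repeat split; try lra; eexists; eassumption.
  - rewrite (Derive_of_is_derive (fun t => fa t) x _ Ha),
      (Derive_of_is_derive (fun t => fb t) x _ Hb), (Derive_of_is_derive (fun t => fc t) x _ Hc).
    unfold fa, fb, fc. kink_identity x y.
Qed.

Lemma Wplus_dy (x y : R) : is_derive (fun t => Wplus q p Phi x t) y 0.
Proof.
  destruct (Hsol x y) as [_ (Ha & Hb & Hc & _)].
  set (fa := fun t => Re (fst (Phi x t))) in *.
  set (fb := fun t => Im (fst (Phi x t))) in *.
  set (fc := fun t => Re (snd (Phi x t))) in *.
  apply (is_derive_ext (fun t => exp ((p * x + q * t) / 2) *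
    ((p - tnh x) * fa t + q * fb t + sech x * fc t))); [reflexivity|].
  auto_derive.
  - repeat split; eexists; eassumption.
  - rewrite (Derive_of_is_derive (fun t => fa t) y _ Ha),
      (Derive_of_is_derive (fun t => fb t) y _ Hb), (Derive_of_is_derive (fun t => fc t) y _ Hc).
    unfold fa, fb, fc. kink_identity x y.
Qed.

Variable M : R.
Hypothesis Hbound : forall x y : R, - q * x + p * y = 0 -> normC2 (Phi x y) <= M.

Lemma line_point (s : R) : - q * (s * p) + p * (s * q) = 0 /\ p * (s * p) + q * (s * q) = s.
Proof.
  split; [ring |].
  transitivity (s * (q ^ 2 + p ^ 2)); [ring | rewrite unit_circle; ring].
Qed.

(* Boundedness on l kills both first integrals: W- decays as s -> +oo and
   W+ as s -> -oo along l. *)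
Lemma Wminus_vanishes (x y : R) : Wminus q p Phi x y = 0.
Proof.
  rewrite (constant_of_zero_partials _ Wminus_dx Wminus_dy x y).
  apply (zero_of_decay _ (2 * M)). intros t _.
  destruct (line_point t) as [Hl Hs].
  rewrite <- (constant_of_zero_partials _ Wminus_dx Wminus_dy (t * p) (t * q)).
  unfold Wminus. rewrite Hs, Rabs_mult, Rabs_pos_eq by apply Rlt_le, exp_pos.
  pose proof (Lminus_bound q p (t * p) (Phi (t * p) (t * q)) unit_circle).
  pose proof (Hbound _ _ Hl). pose proof (exp_pos (- t / 2)). nra.
Qed.

Lemma Wplus_vanishes (x y : R) : Wplus q p Phi x y = 0.
Proof.
  rewrite (constant_of_zero_partials _ Wplus_dx Wplus_dy x y).
  apply (zero_of_decay _ (2 * M)). intros t _.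
  destruct (line_point (- t)) as [Hl Hs].
  rewrite <- (constant_of_zero_partials _ Wplus_dx Wplus_dy (- t * p) (- t * q)).
  unfold Wplus. rewrite Hs, Rabs_mult, Rabs_pos_eq by apply Rlt_le, exp_pos.
  pose proof (Lplus_bound q p (- t * p) (Phi (- t * p) (- t * q)) unit_circle).
  pose proof (Hbound _ _ Hl). pose proof (exp_pos (- t / 2)). nra.
Qed.

Lemma kink_forms_vanish (x y : R) :
  Lminus q p x (Phi x y) = 0 /\ Lplus q p x (Phi x y) = 0.
Proof.
  pose proof (Wminus_vanishes x y) as Hminus. pose proof (Wplus_vanishes x y) as Hplus.
  unfold Wminus, Wplus in *. split.
  - apply (Rmult_eq_reg_l (exp (- (p * x + q * y) / 2))).
    + now rewrite Rmult_0_r.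
    + apply Rgt_not_eq, exp_pos.
  - apply (Rmult_eq_reg_l (exp ((p * x + q * y) / 2))).
    + now rewrite Rmult_0_r.
    + apply Rgt_not_eq, exp_pos.
Qed.

End FirstIntegrals.

(* Cramer's rule for the system W- = W+ = 0: its determinant is -2 q lambda.
   In real terms, -2q times each component of v is a combination of the four
   real equations. *)
Lemma kink_forms_nondegenerate (q p r x : R) (v : C2) :
  q = (1 - r ^ 2) / (1 + r ^ 2) -> p = 2 * r / (1 + r ^ 2) -> q <> 0 ->
  Lminus q p x v = 0 -> Lminus q p x (scal2 Ci v) = 0 ->
  Lplus q p x v = 0 -> Lplus q p x (scal2 Ci v) = 0 ->
  v = (RtoC 0, RtoC 0).
Proof.
  intros Hq Hp Hq0 E1 E2 E3 E4.
  set (S := sech x) in *; set (T := tnh x) in *.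
  set (P1 := S * Lminus q p x v + (p + T) * Lplus q p x v - q * Lplus q p x (scal2 Ci v)).
  set (P2 := - S * Lminus q p x (scal2 Ci v) - (p + T) * Lplus q p x (scal2 Ci v)
             - q * Lplus q p x v).
  set (Q1 := (T - p) * Lminus q p x v + q * Lminus q p x (scal2 Ci v) - S * Lplus q p x v).
  set (Q2 := - (T - p) * Lminus q p x (scal2 Ci v) + q * Lminus q p x v
             + S * Lplus q p x (scal2 Ci v)).
  assert (HP1 : P1 = 0) by (unfold P1; rewrite E1, E3, E4; ring).
  assert (HP2 : P2 = 0) by (unfold P2; rewrite E2, E3, E4; ring).
  assert (HQ1 : Q1 = 0) by (unfold Q1; rewrite E1, E2, E3; ring).
  assert (HQ2 : Q2 = 0) by (unfold Q2; rewrite E1, E2, E4; ring).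
  destruct v as [[a b] [c d]].
  assert (Hden : 0 < 1 + r ^ 2) by nra. pose proof (exp_den_pos x).
  assert (Ia : -2 * q * a = q * P1 + p * P2).
  { unfold P1, P2, Lminus, Lplus, scal2, S, T, sech, tnh; simpl.
    rewrite Hq, Hp. field. lra. }
  assert (Ib : -2 * q * b = q * P2 - p * P1).
  { unfold P1, P2, Lminus, Lplus, scal2, S, T, sech, tnh; simpl.
    rewrite Hq, Hp. field. lra. }
  assert (Ic : -2 * q * c = q * Q1 + p * Q2).
  { unfold Q1, Q2, Lminus, Lplus, scal2, S, T, sech, tnh; simpl.
    rewrite Hq, Hp. field. lra. }
  assert (Id : -2 * q * d = q * Q2 - p * Q1).
  { unfold Q1, Q2, Lminus, Lplus, scal2, S, T, sech, tnh; simpl.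
    rewrite Hq, Hp. field. lra. }
  rewrite HP1, HP2 in Ia, Ib. rewrite HQ1, HQ2 in Ic, Id.
  assert (Hcancel : forall z, -2 * q * z = 0 -> z = 0)
    by (intros z Hz; apply (Rmult_eq_reg_l (-2 * q)); lra).
  unfold RtoC. f_equal; f_equal; apply Hcancel; lra.
Qed.

Lemma unit_circle_rational (q p : R) :
  q ^ 2 + p ^ 2 = 1 -> 0 < p ->
  exists r : R, q = (1 - r ^ 2) / (1 + r ^ 2) /\ p = 2 * r / (1 + r ^ 2).
Proof.
  intros Hqp Hp0. assert (Hq1 : 0 < 1 + q) by nra.
  exists (p / (1 + q)).
  assert (Hr2 : (p / (1 + q)) ^ 2 = (1 - q) / (1 + q)).
  { unfold Rdiv. rewrite Rpow_mult_distr, pow_inv.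
    replace (p ^ 2) with ((1 - q) * (1 + q)) by lra. field. lra. }
  rewrite Hr2. split; field; lra.
Qed.

Lemma q_neq_0 (q p : R) : q ^ 2 + p ^ 2 = 1 -> 0 < p -> (q, p) <> Ci -> q <> 0.
Proof.
  intros Hqp Hp0 Hci ->. apply Hci.
  assert (p = 1) as -> by nra. reflexivity.
Qed.

Theorem corollary3p10 (q p : R) (Phi : R -> R -> C2) :
  q ^ 2 + p ^ 2 = 1 -> 0 < p -> (q, p) <> Ci ->
  smoothC2 Phi ->
  parallel (fun x _ => Hkink x) (q, p) Phi ->
  (exists M : R, forall x y : R, - q * x + p * y = 0 -> normC2 (Phi x y) <= M) ->
  forall x y : R, Phi x y = (RtoC 0, RtoC 0).
Proof.
  intros Hqp Hp0 Hci _ Hpar [M HM] x y.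
  destruct (unit_circle_rational q p Hqp Hp0) as (r & Hq & Hp).
  pose proof (parallel_solves _ _ _ Hpar) as Hsol.
  pose proof (solves_rot _ _ _ Hsol) as Hsol_rot.
  assert (HM_rot : forall x y, - q * x + p * y = 0 -> normC2 (scal2 Ci (Phi x y)) <= M)
    by (intros; rewrite normC2_scal2_Ci; auto).
  destruct (kink_forms_vanish q p r Phi Hq Hp Hsol M HM x y) as [E1 E3].
  destruct (kink_forms_vanish q p r _ Hq Hp Hsol_rot M HM_rot x y) as [E2 E4].
  exact (kink_forms_nondegenerate q p r x (Phi x y) Hq Hp (q_neq_0 q p Hqp Hp0 Hci) E1 E2 E3 E4).
Qed.
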